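(* If $0\to(M,\alpha_M)\to(K,\alpha_K)\xrightarrow{\pi}(L,\alpha_L)\to0$ is a universal $\alpha$-central extension of Hom-Leibniz $n$-algebras, then ${}_nHL_0^\alpha(K)={}_nHL_1^\alpha(K)=0$.
   Context: Fix a field $\mathbb K$ and $n\ge2$. A (multiplicative) Hom-Leibniz $n$-algebra is a $\mathbb K$-vector space $L$ with an $n$-linear bracket and a linear map $\alpha_L$ preserving the bracket, satisfying $[[x_1,\dots,x_n],\alpha_L(y_1),\dots,\alpha_L(y_{n-1})]=\sum_{i=1}^n[\alpha_L(x_1),\dots,[x_i,y_1,\dots,y_{n-1}],\dots,\alpha_L(x_n)]$. Homomorphisms preserve brackets and commute with twisting maps. Center $Z(K)$: elements $x$ with every bracket having $x$ in some position equal to $0$. An extension of $L$ is a surjective homomorphism $\pi:K\to L$ with kernel $M$; central if $M\subseteq Z(K)$; $\alpha$-central if every bracket with $n-1$ entries in $\alpha_K(M)$ and the remaining entry (any position) in $K$ vanishes. A central extension $\pi$ is universal $\alpha$-central if for every $\alpha$-central extension $\pi':K'\to L$ there is a unique homomorphism $h:K\to K'$ with $\pi'\circ h=\pi$. For a Hom-Leibniz $n$-algebra $(K,\alpha_K)$ define $\delta_1:K^{\otimes n}\to K$, $\delta_1(x_1\otimes\dots\otimes x_n)=[x_1,\dots,x_n]$, and $\delta_2:K^{\otimes(2n-1)}\to K^{\otimes n}$, $\delta_2(x_1\otimes\dots\otimes x_n\otimes y_1\otimes\dots\otimes y_{n-1})=[x_1,\dots,x_n]\otimes\alpha_K(y_1)\otimes\dots\otimes\alpha_K(y_{n-1})-\sum_{i=1}^n\alpha_K(x_1)\otimes\dots\otimes[x_i,y_1,\dots,y_{n-1}]\otimes\dots\otimes\alpha_K(x_n)$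 (in the $i$-th term all factors other than the $i$-th are $\alpha_K(x_j)$). Then ${}_nHL_0^\alpha(K)=K/[K,\dots,K]$ and ${}_nHL_1^\alpha(K)=\ker\delta_1/\operatorname{im}\delta_2$. *)

From HB Require Import structures.
From mathcomp Require Import all_boot all_order all_algebra.
Set Implicit Arguments. Unset Strict Implicit. Unset Printing Implicit Defensive.
Import GRing.Theory.
Local Open Scope ring_scope.

Section HomLeibniz.
Variables (F : fieldType) (n : nat).

Definition is_linear (V W : lmodType F) (f : V -> W) : Prop :=
  forall (a : F) (x y : V), f (a *: x + y) = a *: f x + f y.

Definition upd (V : Type) (u : {ffun 'I_n -> V}) (i : 'I_n) (x : V)
  : {ffun 'I_n -> V} := [ffun j => if j == i then x else u j].

Definition fmap (V W : Type) (f : V -> W) (u : {ffun 'I_n -> V})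
  : {ffun 'I_n -> W} := [ffun j => f (u j)].

(* the n-tuple (z, y_1, ..., y_{n-1}) *)
Definition hd_tup (V : Type) (z : V) (y : {ffun 'I_n.-1 -> V}) : {ffun 'I_n -> V} :=
  [ffun j : 'I_n => if nat_of_ord j is k.+1 then
       (if @insub _ (fun k => k < n.-1)%N 'I_n.-1 k is Some k' then y k' else z)
     else z].

Definition fmap' (V W : Type) (f : V -> W) (u : {ffun 'I_n.-1 -> V})
  : {ffun 'I_n.-1 -> W} := [ffun j => f (u j)].

Definition multilinear (V W : lmodType F) (f : {ffun 'I_n -> V} -> W) : Prop :=
  forall (i : 'I_n) (u : {ffun 'I_n -> V}) (a : F) (x y : V),
    f (upd u i (a *: x + y)) = a *: f (upd u i x) + f (upd u i y).

Record hleib := HLeib {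
  hl_sort :> lmodType F;
  hl_br : {ffun 'I_n -> hl_sort} -> hl_sort;
  hl_alpha : hl_sort -> hl_sort;
  hl_br_ml : multilinear hl_br;
  hl_alpha_lin : is_linear hl_alpha;
  hl_alpha_br : forall u, hl_alpha (hl_br u) = hl_br (fmap hl_alpha u);
  hl_leibniz : forall (x : {ffun 'I_n -> hl_sort}) (y : {ffun 'I_n.-1 -> hl_sort}),
    hl_br (hd_tup (hl_br x) (fmap' hl_alpha y))
    = \sum_(i < n) hl_br (upd (fmap hl_alpha x) i (hl_br (hd_tup (x i) y)))
}.

Definition is_hom (A B : hleib) (f : A -> B) : Prop :=
  [/\ is_linear f,
      forall u, f (hl_br u) = hl_br (fmap f u)
    & forall x, f (hl_alpha x) = hl_alpha (f x)].

Definition in_center (K : hleib) (x : K) : Prop :=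
  forall (i : 'I_n) (u : {ffun 'I_n -> K}), hl_br (upd u i x) = 0.

(* extension pi : K -> L (surjective homomorphism), kernel M = ker pi *)
Definition is_extension (K L : hleib) (pi : K -> L) : Prop :=
  is_hom pi /\ (forall l : L, exists k : K, pi k = l).

Definition in_ker (K L : hleib) (pi : K -> L) (x : K) : Prop := pi x = 0.

Definition central_ext (K L : hleib) (pi : K -> L) : Prop :=
  is_extension pi /\ forall x : K, in_ker pi x -> in_center x.

Definition alpha_central_ext (K L : hleib) (pi : K -> L) : Prop :=
  is_extension pi /\
  forall (i : 'I_n) (u : {ffun 'I_n -> K}),
    (forall j, j != i -> exists m : K, in_ker pi m /\ u j = hl_alpha m) ->
    hl_br u = 0.

Definition universal_alpha_central_ext (K L : hleib) (pi : K -> L) : Prop :=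
  central_ext pi /\
  forall (K' : hleib) (pi' : K' -> L), alpha_central_ext pi' ->
    exists h : K -> K', [/\ is_hom h, (forall x, pi' (h x) = pi x)
      & forall h' : K -> K', is_hom h' -> (forall x, pi' (h' x) = pi x) ->
          forall x, h' x = h x].

(* nHL_0(K) = K / [K,...,K] = 0 : K is spanned by brackets *)
Definition HL0_trivial (K : hleib) : Prop :=
  forall x : K, exists s : seq (F * {ffun 'I_n -> K}),
    x = \sum_(p <- s) p.1 *: hl_br p.2.

(* Elements of K^{(x)n} are represented by formal linear combinations of
   n-tuples (elements of the free vector space on K^n), modulo the
   subspace generated by the multilinearity relations. *)
Section Tensor.
Variable K : hleib.
Local Notation tup := {ffun 'I_n -> K}.
Local Notation comb := (seq (F * tup)).

Definition fcoef (t : comb) (u : tup) : F := \sum_(p <- t | p.2 == u) p.1.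

Definition cscale (c : F) (t : comb) : comb := [seq (c * p.1, p.2) | p <- t].

Definition ml_gen (i : 'I_n) (u : tup) (a : F) (x y : K) : comb :=
  [:: (1, upd u i (a *: x + y)); (- a, upd u i x); (-1, upd u i y)].

(* s and t represent the same element of K^{(x)n} *)
Definition tensor_eq (s t : comb) : Prop :=
  exists g : seq (F * ('I_n * tup * F * K * K)),
    forall u, fcoef s u - fcoef t u =
      fcoef (flatten [seq cscale q.1
                        (ml_gen q.2.1.1.1.1 q.2.1.1.1.2 q.2.1.1.2 q.2.1.2 q.2.2)
                     | q <- g]) u.

Definition delta1 (t : comb) : K := \sum_(p <- t) p.1 *: hl_br p.2.

Definition delta2 (x : tup) (y : {ffun 'I_n.-1 -> K}) : comb :=
  (1, hd_tup (hl_br x) (fmap' (@hl_alpha K) y))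
  :: [seq (-1, upd (fmap (@hl_alpha K) x) i (hl_br (hd_tup (x i) y))) | i <- enum 'I_n].

(* a general element of im delta_2: a linear combination of images of
   pure (2n-1)-tensors (which span K^{(x)(2n-1)}) *)
Definition delta2_comb (d : seq (F * (tup * {ffun 'I_n.-1 -> K}))) : comb :=
  flatten [seq cscale q.1 (delta2 q.2.1 q.2.2) | q <- d].

(* nHL_1(K) = ker delta_1 / im delta_2 = 0 *)
Definition HL1_trivial : Prop :=
  forall t : comb, delta1 t = 0 ->
    exists d, tensor_eq t (delta2_comb d).

End Tensor.

End HomLeibniz.

From HB Require Import structures.
From mathcomp Require Import all_boot all_order all_algebra.
From mathcomp Require Import ring.
From Stdlib Require Import ClassicalEpsilon FunctionalExtensionality PropExtensionality.
Set Implicit Arguments. Unset Strict Implicit. Unset Printing Implicit Defensive.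
Import GRing.Theory.
Local Open Scope ring_scope.

(** Every module [V] with a compatible map [alpha_V] and an alpha-central
    "cocycle" [beta : K^n -> V] (multilinear, commuting with the twisting maps
    and satisfying the Leibniz identity) gives an alpha-central extension
    [K (+) V] of [L] with bracket [x |-> ([x], beta x)].  By universality there
    is exactly one linear [f : K -> V] with [f [x] = beta x] and
    [f \o alpha_K = alpha_V \o f].
    - For [V = K / [K, ..., K]] and [beta = 0], both the quotient map and [0]
      qualify, so the quotient map vanishes: [HL_0 = 0].
    - For [V] the n-tensors modulo multilinearity, [im delta_2] and the tensors
      with [n - 1] entries in [alpha_K(M)], and [beta] the class of a tensor,
      [f \o delta_1] is the quotient map, so [ker delta_1] lies in that span.
      Since [K = [K, ..., K]], a tensor with [n - 1] entries in [alpha_K(M)]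
      is itself, modulo multilinearity, the image under [delta_2] of a tensor
      whose entries in [M] kill every bracket but one: [HL_1 = 0]. *)

Section LinearFacts.
Variables (F : fieldType) (V W : lmodType F) (f : V -> W).
Hypothesis f_lin : is_linear f.

Lemma is_linear0 : f 0 = 0.
Proof. by apply: (addrI (f 0)); rewrite addr0 -{1}[f 0]scale1r -f_lin scale1r addr0. Qed.

Lemma is_linearD x y : f (x + y) = f x + f y.
Proof. by rewrite -{1}[x]scale1r f_lin scale1r. Qed.

Lemma is_linearZ a x : f (a *: x) = a *: f x.
Proof. by rewrite -[a *: x]addr0 f_lin is_linear0 addr0. Qed.

Lemma is_linear_sum (I : Type) (r : seq I) (G : I -> V) :
  f (\sum_(i <- r) G i) = \sum_(i <- r) f (G i).
Proof.
by elim: r => [|i r IHr]; rewrite ?big_nil ?is_linear0 // !big_cons is_linearD IHr.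
Qed.
End LinearFacts.

Section Combinations.
Variables (F : fieldType) (X : choiceType).
Local Notation comb := (seq (F * X)).

(* Formal linear combinations; at tuples, [comb_coef] and [comb_scale] are
   the [fcoef] and [cscale] of the tensor encoding. *)
Definition comb_coef (s : comb) (u : X) : F := \sum_(p <- s | p.2 == u) p.1.
Definition comb_scale (c : F) (s : comb) : comb := [seq (c * p.1, p.2) | p <- s].
Definition comb_map (g : X -> X) (s : comb) : comb := [seq (p.1, g p.2) | p <- s].
Definition comb_eval (V : lmodType F) (g : X -> V) (s : comb) : V :=
  \sum_(p <- s) p.1 *: g p.2.

Lemma comb_coef_nil u : comb_coef [::] u = 0.
Proof. by rewrite /comb_coef big_nil. Qed.

Lemma comb_coef_cons c x s u :
  comb_coef ((c, x) :: s) u = c * (x == u)%:R + comb_coef s u.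
Proof. by rewrite /comb_coef big_cons /=; case: (x == u); rewrite ?mulr1 ?mulr0 ?add0r. Qed.

Lemma comb_coef_cat s t u : comb_coef (s ++ t) u = comb_coef s u + comb_coef t u.
Proof. by rewrite /comb_coef big_cat. Qed.

Lemma comb_coef_scale c s u : comb_coef (comb_scale c s) u = c * comb_coef s u.
Proof. by rewrite /comb_coef big_map mulr_sumr. Qed.

Lemma comb_coef_map g s u :
  comb_coef (comb_map g s) u = comb_eval (V := F^o) (fun x => (g x == u)%:R) s.
Proof.
rewrite /comb_coef /comb_eval big_map big_mkcond; apply: eq_bigr => p _ /=.
by case: (g p.2 == u); rewrite /GRing.scale /= ?mulr1 ?mulr0.
Qed.

Lemma comb_map_cat g s t : comb_map g (s ++ t) = comb_map g s ++ comb_map g t.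
Proof. exact: map_cat. Qed.

Lemma comb_map_scale g c s : comb_map g (comb_scale c s) = comb_scale c (comb_map g s).
Proof. by elim: s => //= p s ->. Qed.

Lemma comb_eval_cat (V : lmodType F) (g : X -> V) s t :
  comb_eval g (s ++ t) = comb_eval g s + comb_eval g t.
Proof. by rewrite /comb_eval big_cat. Qed.

Lemma comb_eval_scale (V : lmodType F) (g : X -> V) c s :
  comb_eval g (comb_scale c s) = c *: comb_eval g s.
Proof. by rewrite /comb_eval big_map scaler_sumr; apply: eq_bigr => p _; rewrite scalerA. Qed.

Lemma linear_comb_eval (V W : lmodType F) (f : V -> W) (g : X -> V) s :
  is_linear f -> f (comb_eval g s) = comb_eval (f \o g) s.
Proof.
move=> f_lin; rewrite /comb_eval (is_linear_sum f_lin).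
by apply: eq_bigr => p _; rewrite (is_linearZ f_lin).
Qed.

Lemma comb_evalE (V : lmodType F) (g : X -> V) (s : comb) (r : seq X) :
  uniq r -> {subset unzip2 s <= r} -> comb_eval g s = \sum_(u <- r) comb_coef s u *: g u.
Proof.
move=> r_uniq; elim: s => [|[c x] s IHs] sub_r.
  by rewrite /comb_eval big_nil big1 // => u _; rewrite comb_coef_nil scale0r.
rewrite /comb_eval big_cons /= -/(comb_eval g s) IHs; last first.
  by move=> y ys; apply: sub_r; rewrite inE ys orbT.
under [RHS]eq_bigr => u _ do rewrite comb_coef_cons scalerDl.
rewrite big_split /=; congr (_ + _).
have x_r : x \in r by apply: sub_r; rewrite inE eqxx.
rewrite (bigD1_seq x) //= eqxx mulr1 big1 ?addr0 // => u /negbTE.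
by rewrite eq_sym => ->; rewrite mulr0 scale0r.
Qed.

Lemma eq_comb_eval (V : lmodType F) (g : X -> V) (s t : comb) :
  comb_coef s =1 comb_coef t -> comb_eval g s = comb_eval g t.
Proof.
move=> eq_st; set r := undup (unzip2 s ++ unzip2 t).
have r_uniq : uniq r by apply: undup_uniq.
rewrite (@comb_evalE _ _ s r) // ?(@comb_evalE _ _ t r) //.
- by apply: eq_bigr => u _; rewrite eq_st.
- by move=> y ys; rewrite mem_undup mem_cat ys orbT.
- by move=> y ys; rewrite mem_undup mem_cat ys.
Qed.

Lemma flatten_comb_cat (I : Type) (gen : I -> comb) (d1 d2 : seq (F * I)) :
  flatten [seq comb_scale q.1 (gen q.2) | q <- d1 ++ d2]
  = flatten [seq comb_scale q.1 (gen q.2) | q <- d1]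
    ++ flatten [seq comb_scale q.1 (gen q.2) | q <- d2].
Proof. by rewrite map_cat flatten_cat. Qed.

Lemma flatten_comb_scale (I : Type) (gen : I -> comb) (c : F) (d : seq (F * I)) :
  flatten [seq comb_scale q.1 (gen q.2) | q <- [seq (c * q.1, q.2) | q <- d]]
  = comb_scale c (flatten [seq comb_scale q.1 (gen q.2) | q <- d]).
Proof.
elim: d => //= q d ->; rewrite /comb_scale map_cat; congr (_ ++ _).
by rewrite -map_comp; apply: eq_map => p /=; rewrite mulrA.
Qed.

Record comb_subspace := CombSubspace {
  in_comb_subspace :> comb -> Prop;
  comb_subspace_nil : in_comb_subspace [::];
  comb_subspace_cat : forall s t,
    in_comb_subspace s -> in_comb_subspace t -> in_comb_subspace (s ++ t);
  comb_subspace_scale : forall c s,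
    in_comb_subspace s -> in_comb_subspace (comb_scale c s);
  comb_subspace_coef : forall s t,
    comb_coef s =1 comb_coef t -> in_comb_subspace s -> in_comb_subspace t }.

Section Quotient.
Variable S : comb_subspace.

Ltac coef_ring := move=> ?; repeat progress
  rewrite ?comb_coef_cat ?comb_coef_scale ?comb_coef_nil ?comb_coef_cons; ring.

Definition comb_equiv (s t : comb) := S (s ++ comb_scale (-1) t).

Lemma comb_equiv_coef s t : comb_coef s =1 comb_coef t -> comb_equiv s t.
Proof.
move=> eq_st; apply: comb_subspace_coef (comb_subspace_nil S) => u.
by rewrite comb_coef_cat comb_coef_scale comb_coef_nil eq_st; ring.
Qed.

Lemma comb_equiv_refl s : comb_equiv s s.
Proof. exact: comb_equiv_coef. Qed.

Lemma comb_equiv_sym s t : comb_equiv s t -> comb_equiv t s.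
Proof. by move=> st; apply: comb_subspace_coef (comb_subspace_scale (-1) st); coef_ring. Qed.

Lemma comb_equiv_trans s t r : comb_equiv s t -> comb_equiv t r -> comb_equiv s r.
Proof. by move=> st tr; apply: comb_subspace_coef (comb_subspace_cat st tr); coef_ring. Qed.

Lemma comb_equiv_cat s1 t1 s2 t2 :
  comb_equiv s1 t1 -> comb_equiv s2 t2 -> comb_equiv (s1 ++ s2) (t1 ++ t2).
Proof. by move=> e1 e2; apply: comb_subspace_coef (comb_subspace_cat e1 e2); coef_ring. Qed.

Lemma comb_equiv_scale c s t : comb_equiv s t -> comb_equiv (comb_scale c s) (comb_scale c t).
Proof. by move=> st; apply: comb_subspace_coef (comb_subspace_scale c st); coef_ring. Qed.

Lemma comb_equiv_nil s : comb_equiv s [::] <-> S s.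
Proof. by split; apply: comb_subspace_coef; coef_ring. Qed.

(* Classes are represented by a representative chosen by [epsilon], so that
   equality of classes is Leibniz equality on a subtype. *)
Definition comb_repr (s : comb) : comb := epsilon (inhabits [::]) (comb_equiv s).

Lemma comb_repr_equiv s : comb_equiv s (comb_repr s).
Proof. by apply: epsilon_spec; exists s; apply: comb_equiv_refl. Qed.

Lemma eq_comb_repr s t : comb_equiv s t -> comb_repr s = comb_repr t.
Proof.
move=> st; rewrite /comb_repr; congr epsilon; apply: functional_extensionality => r.
apply: propositional_extensionality; split => [sr|tr].
  exact: comb_equiv_trans (comb_equiv_sym st) sr.
exact: comb_equiv_trans st tr.
Qed.

Lemma comb_reprK s : comb_repr (comb_repr s) == comb_repr s.
Proof. by apply/eqP/eq_comb_repr/comb_equiv_sym/comb_repr_equiv. Qed.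

Definition comb_quot := {s : comb | comb_repr s == s}.
HB.instance Definition _ := Choice.on comb_quot.

Definition cclass (s : comb) : comb_quot := exist _ (comb_repr s) (comb_reprK s).

Lemma cclass_eq s t : comb_equiv s t -> cclass s = cclass t.
Proof. by move=> st; apply: val_inj; apply: eq_comb_repr. Qed.

Lemma cclass_equiv s t : cclass s = cclass t -> comb_equiv s t.
Proof.
move=> /(congr1 val) /= e; apply: comb_equiv_trans (comb_repr_equiv s) _.
by rewrite e; apply/comb_equiv_sym/comb_repr_equiv.
Qed.

Lemma cclassK (a : comb_quot) : cclass (val a) = a.
Proof. by apply: val_inj => /=; apply/eqP; case: a. Qed.

Lemma cclass_ind (P : comb_quot -> Prop) : (forall s, P (cclass s)) -> forall a, P a.
Proof. by move=> Pcl a; rewrite -(cclassK a). Qed.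

Definition cq_zero := cclass [::].
Definition cq_add (a b : comb_quot) := cclass (val a ++ val b).
Definition cq_scale (c : F) (a : comb_quot) := cclass (comb_scale c (val a)).
Definition cq_opp := cq_scale (-1).

Lemma cq_addE s t : cq_add (cclass s) (cclass t) = cclass (s ++ t).
Proof.
apply: cclass_eq; apply: comb_equiv_cat; apply/comb_equiv_sym/comb_repr_equiv.
Qed.

Lemma cq_scaleE c s : cq_scale c (cclass s) = cclass (comb_scale c s).
Proof. by apply/cclass_eq/comb_equiv_scale/comb_equiv_sym/comb_repr_equiv. Qed.

Lemma cq_eq_coef s t : comb_coef s =1 comb_coef t -> cclass s = cclass t.
Proof. by move=> eq_st; apply/cclass_eq/comb_equiv_coef. Qed.

Lemma cq_addA : associative cq_add.
Proof. by elim/cclass_ind=> s; elim/cclass_ind=> t; elim/cclass_ind=> r; rewrite !cq_addE catA. Qed.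

Lemma cq_addC : commutative cq_add.
Proof.
by elim/cclass_ind=> s; elim/cclass_ind=> t; rewrite !cq_addE; apply: cq_eq_coef; coef_ring.
Qed.

Lemma cq_add0 : left_id cq_zero cq_add.
Proof. by elim/cclass_ind=> s; rewrite cq_addE. Qed.

Lemma cq_addN : left_inverse cq_zero cq_opp cq_add.
Proof. by elim/cclass_ind=> s; rewrite /cq_opp cq_scaleE cq_addE; apply: cq_eq_coef; coef_ring. Qed.

HB.instance Definition _ := GRing.isZmodule.Build comb_quot cq_addA cq_addC cq_add0 cq_addN.

Lemma cq_scaleA a b v : cq_scale a (cq_scale b v) = cq_scale (a * b) v.
Proof. by elim/cclass_ind: v => s; rewrite !cq_scaleE; apply: cq_eq_coef; coef_ring. Qed.

Lemma cq_scale1 : left_id 1 cq_scale.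
Proof. by elim/cclass_ind=> s; rewrite cq_scaleE; apply: cq_eq_coef; coef_ring. Qed.

Lemma cq_scaleDr : right_distributive cq_scale cq_add.
Proof.
move=> c; elim/cclass_ind=> s; elim/cclass_ind=> t.
by rewrite cq_addE !cq_scaleE cq_addE; apply: cq_eq_coef; coef_ring.
Qed.

Lemma cq_scaleDl v : {morph cq_scale^~ v : a b / a + b >-> cq_add a b}.
Proof.
elim/cclass_ind: v => s a b.
by rewrite !cq_scaleE cq_addE; apply: cq_eq_coef; coef_ring.
Qed.

HB.instance Definition _ :=
  GRing.Zmodule_isLmodule.Build F comb_quot cq_scaleA cq_scale1 cq_scaleDr cq_scaleDl.

Lemma cclass_cat s t : cclass (s ++ t) = cclass s + cclass t.
Proof. exact/esym/cq_addE. Qed.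

Lemma cclass_scale c s : cclass (comb_scale c s) = c *: cclass s.
Proof. exact/esym/cq_scaleE. Qed.

Lemma cclass_sum (I : Type) (r : seq I) (f : I -> comb) :
  cclass (flatten (map f r)) = \sum_(i <- r) cclass (f i).
Proof. by elim: r => [|i r IHr]; rewrite ?big_nil // big_cons cclass_cat IHr. Qed.

Lemma comb_eval_cclass s : comb_eval (fun x => cclass [:: (1, x)]) s = cclass s.
Proof.
elim: s => [|[c x] s IHs]; first by rewrite /comb_eval big_nil.
move: IHs; rewrite /comb_eval big_cons => -> /=; rewrite -cclass_scale -cclass_cat.
by apply: cq_eq_coef; coef_ring.
Qed.

Lemma cclass_eq0 s : cclass s = 0 <-> S s.
Proof. by rewrite -comb_equiv_nil; split=> [/cclass_equiv|/cclass_eq]. Qed.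

Section QuotientMap.
Variable g : X -> X.
Hypothesis S_map : forall s, S s -> S (comb_map g s).

Definition cq_map (a : comb_quot) : comb_quot := cclass (comb_map g (val a)).

Lemma cq_mapE s : cq_map (cclass s) = cclass (comb_map g s).
Proof.
apply: cclass_eq; rewrite /comb_equiv -comb_map_scale -comb_map_cat; apply: S_map.
exact/comb_equiv_sym/comb_repr_equiv.
Qed.

Lemma cq_map_linear : is_linear cq_map.
Proof.
move=> c; elim/cclass_ind=> s; elim/cclass_ind=> t.
by rewrite -cclass_scale -cclass_cat !cq_mapE comb_map_cat comb_map_scale cclass_cat cclass_scale.
Qed.
End QuotientMap.
End Quotient.
Arguments comb_equiv : simpl never.

Section EvalSubspace.
Variables (V : lmodType F) (g : X -> V) (P : V -> Prop).
Hypotheses (P0 : P 0) (PD : forall x y, P x -> P y -> P (x + y)).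
Hypothesis PZ : forall c x, P x -> P (c *: x).

Lemma eval_subspace_nil : P (comb_eval g [::]).
Proof. by rewrite /comb_eval big_nil. Qed.

Lemma eval_subspace_cat s t :
  P (comb_eval g s) -> P (comb_eval g t) -> P (comb_eval g (s ++ t)).
Proof. by rewrite comb_eval_cat; apply: PD. Qed.

Lemma eval_subspace_scale c s : P (comb_eval g s) -> P (comb_eval g (comb_scale c s)).
Proof. by rewrite comb_eval_scale; apply: PZ. Qed.

Lemma eval_subspace_coef s t :
  comb_coef s =1 comb_coef t -> P (comb_eval g s) -> P (comb_eval g t).
Proof. by move=> /(eq_comb_eval g) ->. Qed.

Definition eval_subspace : comb_subspace :=
  CombSubspace eval_subspace_nil eval_subspace_cat eval_subspace_scale eval_subspace_coef.
End EvalSubspace.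

Inductive comb_span (P : comb -> Prop) : comb -> Prop :=
| comb_span_gen s : P s -> comb_span P s
| comb_span_nil : comb_span P [::]
| comb_span_cat s t : comb_span P s -> comb_span P t -> comb_span P (s ++ t)
| comb_span_scale c s : comb_span P s -> comb_span P (comb_scale c s)
| comb_span_coef s t : comb_coef s =1 comb_coef t -> comb_span P s -> comb_span P t.

Definition span_subspace (P : comb -> Prop) : comb_subspace :=
  CombSubspace (@comb_span_nil P) (@comb_span_cat P) (@comb_span_scale P)
    (@comb_span_coef P).

Lemma comb_span_map (P : comb -> Prop) (g : X -> X) :
    (forall s, P s -> comb_span P (comb_map g s)) ->
  forall s, comb_span P s -> comb_span P (comb_map g s).
Proof.
move=> Pg s; elim=> [{}s /Pg //|||c {}s _|{}s t eq_st _].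
- exact: comb_span_nil.
- by move=> {}s t _ ss _ tt; rewrite comb_map_cat; apply: comb_span_cat.
- by rewrite comb_map_scale; apply: comb_span_scale.
- apply: comb_span_coef => u; rewrite !comb_coef_map.
  exact: (@eq_comb_eval F^o).
Qed.

Lemma comb_span_flatten (I : Type) (gen : I -> comb) (s : comb) :
    comb_span (fun s => exists q, s = gen q) s ->
  exists d : seq (F * I),
    comb_coef s =1 comb_coef (flatten [seq comb_scale q.1 (gen q.2) | q <- d]).
Proof.
elim=> [_ [q ->]|||c t _ [d e]|t r eq_tr _ [d e]].
- exists [:: (1, q)] => u /=.
  by rewrite comb_coef_cat comb_coef_scale comb_coef_nil mul1r addr0.
- by exists [::].
- move=> t r _ [d1 e1] _ [d2 e2]; exists (d1 ++ d2) => u.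
  by rewrite flatten_comb_cat !comb_coef_cat e1 e2.
- exists [seq (c * q.1, q.2) | q <- d] => u.
  by rewrite flatten_comb_scale !comb_coef_scale e.
- by exists d => u; rewrite -eq_tr e.
Qed.
End Combinations.

Section Tuples.
Variable n : nat.

Lemma fmap_upd (V W : Type) (f : V -> W) (u : {ffun 'I_n -> V}) i x :
  fmap f (upd u i x) = upd (fmap f u) i (f x).
Proof. by apply/ffunP => j; rewrite !ffunE; case: (j == i). Qed.

Lemma fmap_comp (U V W : Type) (f : V -> W) (g : U -> V) (u : {ffun 'I_n -> U}) :
  fmap f (fmap g u) = fmap (f \o g) u.
Proof. by apply/ffunP => j; rewrite !ffunE. Qed.

Lemma fmap'_comp (U V W : Type) (f : V -> W) (g : U -> V) (u : {ffun 'I_n.-1 -> U}) :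
  fmap' f (fmap' g u) = fmap' (f \o g) u.
Proof. by apply/ffunP => j; rewrite !ffunE. Qed.

Lemma eq_fmap (V W : Type) (f g : V -> W) (u : {ffun 'I_n -> V}) :
  f =1 g -> fmap f u = fmap g u.
Proof. by move=> eq_fg; apply/ffunP => j; rewrite !ffunE eq_fg. Qed.

Lemma eq_fmap' (V W : Type) (f g : V -> W) (u : {ffun 'I_n.-1 -> V}) :
  f =1 g -> fmap' f u = fmap' g u.
Proof. by move=> eq_fg; apply/ffunP => j; rewrite !ffunE eq_fg. Qed.

Lemma fmap_id (V : Type) (u : {ffun 'I_n -> V}) : fmap id u = u.
Proof. by apply/ffunP => j; rewrite !ffunE. Qed.

Lemma fmap_hd_tup (V W : Type) (f : V -> W) z (y : {ffun 'I_n.-1 -> V}) :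
  fmap f (hd_tup z y) = hd_tup (f z) (fmap' f y).
Proof.
apply/ffunP => j; rewrite !ffunE; case: (nat_of_ord j) => [|k] //.
by case: insubP => [k' _ _|_] //; rewrite ffunE.
Qed.

Lemma upd_id (V : Type) (u : {ffun 'I_n -> V}) i : upd u i (u i) = u.
Proof. by apply/ffunP => j; rewrite !ffunE; case: eqP => // ->. Qed.
End Tuples.

Section HeadTuples.
Variable m : nat.

Lemma hd_tup0 (V : Type) (z : V) (y : {ffun 'I_m.+1 -> V}) : hd_tup (n := m.+2) z y ord0 = z.
Proof. by rewrite ffunE. Qed.

Lemma hd_tupS (V : Type) (z : V) (y : {ffun 'I_m.+1 -> V}) (k : 'I_m.+1) :
  hd_tup (n := m.+2) z y (lift ord0 k) = y k.
Proof.
rewrite ffunE lift0; case: insubP => [k' _ e|]; last by rewrite ltn_ord.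
by congr (y _); apply: val_inj.
Qed.

Lemma hd_tup_eta (V : Type) (v : {ffun 'I_m.+2 -> V}) :
  hd_tup (v ord0) [ffun k => v (lift ord0 k)] = v.
Proof.
apply/ffunP => j; case: (unliftP ord0 j) => [k ->|->]; last exact: hd_tup0.
by rewrite hd_tupS ffunE.
Qed.

Lemma exists_neq_ord (i : 'I_m.+2) : exists j, j != i.
Proof.
case: (eqVneq i ord0) => [->|i_neq0]; last by exists ord0; rewrite eq_sym.
by exists ord_max.
Qed.
End HeadTuples.

Section CocycleExtension.
Variables (F : fieldType) (n : nat) (K : hleib F n) (V : lmodType F).
Variables (aV : V -> V) (beta : {ffun 'I_n -> K} -> V).
Hypotheses (aV_lin : is_linear aV) (beta_ml : multilinear beta).
Hypothesis beta_alpha : forall x, aV (beta x) = beta (fmap (@hl_alpha _ _ K) x).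
Hypothesis beta_leibniz : forall (x : {ffun 'I_n -> K}) (y : {ffun 'I_n.-1 -> K}),
  beta (hd_tup (hl_br x) (fmap' (@hl_alpha _ _ K) y))
  = \sum_(i < n) beta (upd (fmap (@hl_alpha _ _ K) x) i (hl_br (hd_tup (x i) y))).

Local Notation KV := (K * V)%type.

Definition cext_br (u : {ffun 'I_n -> KV}) : KV :=
  (hl_br (fmap fst u), beta (fmap fst u)).
Definition cext_alpha (p : KV) : KV := (hl_alpha p.1, aV p.2).

Lemma pair_sum (I : Type) (r : seq I) (G : I -> KV) :
  \sum_(i <- r) G i = (\sum_(i <- r) (G i).1, \sum_(i <- r) (G i).2).
Proof. by elim: r => [|i r IHr]; rewrite ?big_nil // !big_cons IHr. Qed.

Lemma cext_br_ml : multilinear cext_br.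
Proof. by move=> i u a x y; rewrite /cext_br !fmap_upd /= hl_br_ml beta_ml. Qed.

Lemma cext_alpha_lin : is_linear cext_alpha.
Proof. by move=> a x y; rewrite /cext_alpha /= hl_alpha_lin aV_lin. Qed.

Lemma cext_alpha_br u : cext_alpha (cext_br u) = cext_br (fmap cext_alpha u).
Proof. by rewrite /cext_alpha /cext_br /= !fmap_comp hl_alpha_br beta_alpha fmap_comp. Qed.

Lemma cext_leibniz (x : {ffun 'I_n -> KV}) (y : {ffun 'I_n.-1 -> KV}) :
  cext_br (hd_tup (cext_br x) (fmap' cext_alpha y))
  = \sum_(i < n) cext_br (upd (fmap cext_alpha x) i (cext_br (hd_tup (x i) y))).
Proof.
have fst_hd i : fmap fst (upd (fmap cext_alpha x) i (cext_br (hd_tup (x i) y)))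
    = upd (fmap (@hl_alpha _ _ K) (fmap fst x)) i
          (hl_br (hd_tup (fmap fst x i) (fmap' fst y))).
  rewrite fmap_upd /= fmap_hd_tup ffunE !fmap_comp.
  by congr upd; apply/ffunP => j; rewrite !ffunE.
rewrite pair_sum /cext_br /= fmap_hd_tup /= fmap'_comp.
rewrite (eq_fmap' (g := @hl_alpha _ _ K \o fst)) // -fmap'_comp.
by rewrite hl_leibniz beta_leibniz; congr (_, _); apply: eq_bigr => i _; rewrite fst_hd.
Qed.

Definition cocycle_ext : hleib F n :=
  HLeib cext_br_ml cext_alpha_lin cext_alpha_br cext_leibniz.
End CocycleExtension.

Section UniversalExtension.
Variables (F : fieldType) (m : nat).
Local Notation n := m.+2.
Variables (K L : hleib F n) (pi : K -> L).
Hypothesis pi_univ : universal_alpha_central_ext pi.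
Local Notation al := (@hl_alpha F n K).
Local Notation tup := {ffun 'I_n -> K}.

Lemma pi_hom : is_hom pi. Proof. by case: pi_univ => [[[]]]. Qed.
Lemma pi_linear : is_linear pi. Proof. by case: pi_hom. Qed.
Lemma pi_br u : pi (hl_br u) = hl_br (fmap pi u). Proof. by case: pi_hom. Qed.
Lemma pi_alpha x : pi (al x) = hl_alpha (pi x). Proof. by case: pi_hom. Qed.
Lemma pi_surj l : exists k, pi k = l. Proof. by case: pi_univ => [[[_]]]. Qed.

Lemma ker_alpha c : pi c = 0 -> pi (al c) = 0.
Proof. by move=> pic0; rewrite pi_alpha pic0 (is_linear0 (@hl_alpha_lin _ _ L)). Qed.

Lemma br_ker_entry c (v : tup) j : pi c = 0 -> v j = c -> hl_br v = 0.
Proof.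
move=> pic0 vj; case: pi_univ => [[_ pi_central] _].
by have := pi_central c pic0 j v; rewrite -vj upd_id.
Qed.

Definition alpha_central_at (u : tup) (i : 'I_n) :=
  forall j, j != i -> exists c, pi c = 0 /\ u j = al c.

Lemma alpha_central_at_br u i : alpha_central_at u i -> hl_br u = 0.
Proof.
move=> u_ac; have [j ji] := exists_neq_ord i; have [c [pic0 ujc]] := u_ac j ji.
exact: br_ker_entry (ker_alpha pic0) ujc.
Qed.

Lemma universal_alpha_central : alpha_central_ext pi.
Proof. by split=> [|i u]; [case: pi_univ => [[]] | exact: alpha_central_at_br]. Qed.

Lemma hom_lift_id (g : K -> K) : is_hom g -> (forall x, pi (g x) = pi x) -> g =1 id.
Proof.
move=> g_hom pig x; case: pi_univ => _ /(_ K pi universal_alpha_central) [h [_ _ h_uniq]].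
have id_hom : is_hom (@id K) by split=> // u; rewrite fmap_id.
by rewrite (h_uniq g g_hom pig) -(h_uniq id id_hom (fun _ => erefl)).
Qed.

Section Cocycle.
Variables (V : lmodType F) (aV : V -> V) (beta : tup -> V).
Hypotheses (aV_lin : is_linear aV) (beta_ml : multilinear beta).
Hypothesis beta_alpha : forall x, aV (beta x) = beta (fmap al x).
Hypothesis beta_leibniz : forall (x : tup) (y : {ffun 'I_n.-1 -> K}),
  beta (hd_tup (hl_br x) (fmap' al y))
  = \sum_(i < n) beta (upd (fmap al x) i (hl_br (hd_tup (x i) y))).
Hypothesis beta_alpha_central : forall u i, alpha_central_at u i -> beta u = 0.

Local Notation KV := (cocycle_ext aV_lin beta_ml beta_alpha beta_leibniz).

Definition cocycle_lift (f : K -> V) :=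
  [/\ is_linear f, forall u, f (hl_br u) = beta u & forall x, f (al x) = aV (f x)].

Definition ext_proj (p : KV) : L := pi p.1.

Lemma ext_proj_alpha_central : alpha_central_ext ext_proj.
Proof.
split; first split; first split.
- by move=> a x y; rewrite /ext_proj /= pi_linear.
- by move=> u; rewrite /ext_proj /= pi_br fmap_comp.
- by move=> x; rewrite /ext_proj /= pi_alpha.
- by move=> l; have [k <-] := pi_surj l; exists (k, 0).
move=> i u u_ac; congr (_, _).
  apply: (@alpha_central_at_br _ i) => j ji; have [c [pic0 ujc]] := u_ac j ji.
  by exists c.1; rewrite ffunE ujc.
apply: (beta_alpha_central (i := i)) => j ji; have [c [pic0 ujc]] := u_ac j ji.
by exists c.1; rewrite ffunE ujc.
Qed.

Lemma graph_hom f : cocycle_lift f -> is_hom (fun k => (k, f k) : KV).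
Proof.
case=> f_lin f_br f_alpha; split.
- by move=> a x y; rewrite f_lin.
- by move=> u; rewrite f_br; congr (_, _); rewrite /= fmap_comp [fmap _ u]fmap_id.
- by move=> x; rewrite f_alpha.
Qed.

Lemma cocycle_lift_exists : exists f, cocycle_lift f.
Proof.
case: pi_univ => _ /(_ KV ext_proj ext_proj_alpha_central) [h [[h_lin h_br h_alpha] pih _]].
have h1 : (fun x => (h x).1) =1 id.
  apply: hom_lift_id => //; split.
  - by move=> a x y; rewrite h_lin.
  - by move=> u; rewrite h_br /= fmap_comp.
  - by move=> x; rewrite h_alpha.
exists (fun x => (h x).2); split.
- by move=> a x y; rewrite h_lin.
- by move=> u; rewrite h_br /= fmap_comp (eq_fmap _ h1) fmap_id.
- by move=> x; rewrite h_alpha.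
Qed.

Lemma cocycle_lift_unique f g : cocycle_lift f -> cocycle_lift g -> f =1 g.
Proof.
move=> /graph_hom f_hom /graph_hom g_hom x.
case: pi_univ => _ /(_ KV ext_proj ext_proj_alpha_central) [h [_ _ h_uniq]].
have hf := h_uniq _ f_hom (fun _ => erefl) x; have hg := h_uniq _ g_hom (fun _ => erefl) x.
by case: (etrans hf (esym hg)).
Qed.
End Cocycle.

Local Notation al_lin := (@hl_alpha_lin F n K).

Definition in_bracket_span (x : K) :=
  exists s : seq (F * tup), x = \sum_(p <- s) p.1 *: hl_br p.2.

Lemma bracket_span0 : in_bracket_span 0.
Proof. by exists [::]; rewrite big_nil. Qed.

Lemma bracket_spanD x y : in_bracket_span x -> in_bracket_span y -> in_bracket_span (x + y).
Proof. by move=> [s ->] [t ->]; exists (s ++ t); rewrite big_cat. Qed.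

Lemma bracket_spanZ c x : in_bracket_span x -> in_bracket_span (c *: x).
Proof.
move=> [s ->]; exists (comb_scale c s); rewrite big_map scaler_sumr.
by apply: eq_bigr => p _; rewrite scalerA.
Qed.

Lemma bracket_span_alpha x : in_bracket_span x -> in_bracket_span (al x).
Proof.
move=> [s ->]; exists [seq (p.1, fmap al p.2) | p <- s].
rewrite big_map (is_linear_sum al_lin); apply: eq_bigr => p _.
by rewrite (is_linearZ al_lin) hl_alpha_br.
Qed.

Lemma bracket_span_br u : in_bracket_span (hl_br u).
Proof. by exists [:: (1, u)]; rewrite big_seq1 scale1r. Qed.

Section Homology0.
Local Notation S := (eval_subspace id bracket_span0 bracket_spanD bracket_spanZ).
Local Notation Q := (comb_quot S).

Lemma bracket_subspace_alpha s : S s -> S (comb_map al s).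
Proof.
move=> /bracket_span_alpha; congr in_bracket_span.
rewrite /comb_eval big_map (is_linear_sum al_lin); apply: eq_bigr => p _.
by rewrite (is_linearZ al_lin).
Qed.

Definition alpha_quot : Q -> Q := cq_map al.
Definition bracket_class (x : K) : Q := cclass S [:: (1, x)].

Lemma alpha_quot_lin : is_linear alpha_quot.
Proof. exact: cq_map_linear bracket_subspace_alpha. Qed.

Lemma zero_ml : multilinear (fun _ : tup => 0 : Q).
Proof. by move=> *; rewrite scaler0 addr0. Qed.

Lemma zero_alpha x : alpha_quot 0 = (fun _ : tup => 0 : Q) (fmap al x).
Proof. exact: is_linear0 alpha_quot_lin. Qed.

Lemma zero_leibniz (x : tup) (y : {ffun 'I_n.-1 -> K}) :
  (0 : Q) = \sum_(i < n) (fun _ : tup => 0 : Q) (upd (fmap al x) i (hl_br (hd_tup (x i) y))).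
Proof. by rewrite big1. Qed.

Lemma zero_alpha_central u i : alpha_central_at u i -> (fun _ : tup => 0 : Q) u = 0.
Proof. by []. Qed.

Lemma bracket_class_eq0 x : bracket_class x = 0 -> in_bracket_span x.
Proof. by move=> /cclass_eq0 /=; rewrite /comb_eval big_seq1 scale1r. Qed.

Lemma bracket_class_lift :
  cocycle_lift alpha_quot (fun _ : tup => 0 : Q) bracket_class.
Proof.
split.
- move=> a x y; rewrite -cclass_scale -cclass_cat; apply: cclass_eq.
  rewrite /comb_equiv /= /comb_eval !big_cons big_nil /=.
  rewrite !mulr1 !mulN1r !scaleNr !scale1r addr0 -opprD subrr.
  exact: bracket_span0.
- move=> u; apply/cclass_eq0 => /=; rewrite /comb_eval big_seq1 scale1r.
  exact: bracket_span_br.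
- by move=> x; rewrite /alpha_quot /bracket_class (cq_mapE bracket_subspace_alpha).
Qed.

Lemma HL0 : HL0_trivial K.
Proof.
move=> x; apply: bracket_class_eq0.
have zero_lift : cocycle_lift alpha_quot (fun _ : tup => 0 : Q) (fun _ => 0).
  by split=> // [a _ _|x']; rewrite ?scaler0 ?addr0 // (is_linear0 alpha_quot_lin).
exact: (cocycle_lift_unique alpha_quot_lin zero_ml zero_alpha zero_leibniz
          zero_alpha_central bracket_class_lift zero_lift).
Qed.
End Homology0.

Section Homology1.
Local Notation ml_gen' q := (ml_gen q.1.1.1.1 q.1.1.1.2 q.1.1.2 q.1.2 q.2).

Definition ml_rel (s : seq (F * tup)) := exists q : 'I_n * tup * F * K * K, s = ml_gen' q.

Definition hl1_rel (s : seq (F * tup)) :=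
  [\/ ml_rel s, exists x y, s = delta2 x y
    | exists u i, s = [:: (1, u)] /\ alpha_central_at u i].

Local Notation W := (comb_quot (span_subspace hl1_rel)).

Lemma delta2_alpha (x : tup) (y : {ffun 'I_n.-1 -> K}) :
  comb_map (fmap al) (delta2 x y) = delta2 (fmap al x) (fmap' al y).
Proof.
rewrite /comb_map /delta2 /= fmap_hd_tup hl_alpha_br; congr (_ :: _).
rewrite -map_comp; apply: eq_map => i /=.
by rewrite fmap_upd hl_alpha_br fmap_hd_tup ffunE.
Qed.

Lemma hl1_rel_alpha s : hl1_rel s -> comb_span hl1_rel (comb_map (fmap al) s).
Proof.
case=> [[[[[[i u] a] x] y] ->]|[x [y ->]]|[u [i [-> u_ac]]]]; apply: comb_span_gen.
- apply: Or31; exists (i, fmap al u, a, al x, al y).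
  by rewrite /comb_map /ml_gen /= !fmap_upd al_lin.
- by apply: Or32; exists (fmap al x), (fmap' al y); rewrite delta2_alpha.
- apply: Or33; exists (fmap al u), i; split=> // j ji.
  have [c [pic0 ujc]] := u_ac j ji; exists (al c); split; first exact: ker_alpha.
  by rewrite ffunE ujc.
Qed.

Lemma hl1_span_alpha s :
  span_subspace hl1_rel s -> span_subspace hl1_rel (comb_map (fmap al) s).
Proof. exact: (comb_span_map hl1_rel_alpha (s := s)). Qed.

Definition alpha_W : W -> W := cq_map (fmap al).
Definition tuple_class (u : tup) : W := cclass _ [:: (1, u)].

Lemma alpha_W_lin : is_linear alpha_W.
Proof. exact: cq_map_linear hl1_span_alpha. Qed.

Lemma tuple_class_ml : multilinear tuple_class.
Proof.
move=> i u a x y; rewrite -cclass_scale -cclass_cat; apply: cclass_eq.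
have ml : hl1_rel (ml_gen i u a x y) by apply: Or31; exists (i, u, a, x, y).
apply: comb_span_coef (comb_span_gen ml).
by move=> v; rewrite /ml_gen /= !comb_coef_cons !comb_coef_nil; ring.
Qed.

Lemma tuple_class_alpha x : alpha_W (tuple_class x) = tuple_class (fmap al x).
Proof. exact: cq_mapE hl1_span_alpha _. Qed.

Lemma tuple_class_leibniz (x : tup) (y : {ffun 'I_n.-1 -> K}) :
  tuple_class (hd_tup (hl_br x) (fmap' al y))
  = \sum_(i < n) tuple_class (upd (fmap al x) i (hl_br (hd_tup (x i) y))).
Proof.
rewrite -big_enum -cclass_sum; apply: cclass_eq; apply: comb_span_gen.
apply: Or32; exists x, y; rewrite /delta2 /comb_scale /=; congr (_ :: _).
by elim: (enum 'I_n) => //= j r ->; rewrite mulr1.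
Qed.

Lemma tuple_class_alpha_central u i : alpha_central_at u i -> tuple_class u = 0.
Proof. by move=> u_ac; apply/cclass_eq0/comb_span_gen/Or33; exists u, i. Qed.

Lemma delta1_ker_span t : delta1 t = 0 -> comb_span hl1_rel t.
Proof.
move=> t_ker; have [f [f_lin f_br _]] := cocycle_lift_exists alpha_W_lin tuple_class_ml
  tuple_class_alpha tuple_class_leibniz tuple_class_alpha_central.
apply/(cclass_eq0 (span_subspace hl1_rel)); rewrite -comb_eval_cclass.
rewrite -(is_linear0 f_lin) -t_ker.
have -> : delta1 t = comb_eval (@hl_br _ _ K) t by [].
rewrite linear_comb_eval //.
by apply: eq_bigr => p _ /=; rewrite f_br.
Qed.

Local Notation ml_equiv := (comb_equiv (span_subspace ml_rel)).

Lemma ml_equiv_zero_entry c (v : tup) k : ml_equiv [:: (c, upd v k 0)] [::].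
Proof.
have ml : ml_rel (ml_gen k v 1 0 0) by exists (k, v, 1, 0, 0).
apply/comb_equiv_nil; apply: comb_span_coef (comb_span_scale (-c) (comb_span_gen ml)).
by move=> u; rewrite /ml_gen /= scale1r addr0 !comb_coef_cons comb_coef_nil; ring.
Qed.

Lemma ml_equiv_filter a (T : 'I_n -> tup) (P : pred 'I_n) (r : seq 'I_n) :
    (forall j, ~~ P j -> exists v k, T j = upd v k 0) ->
  ml_equiv [seq (a, T j) | j <- r] [seq (a, T j) | j <- r & P j].
Proof.
move=> T0; elim: r => [|j r IHr]; first exact: comb_equiv_refl.
have -> : [seq (a, T j') | j' <- j :: r & P j']
    = (if P j then [:: (a, T j)] else [::]) ++ [seq (a, T j') | j' <- r & P j'].
  by rewrite /=; case: (P j).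
rewrite map_cons -cat1s; apply: comb_equiv_cat IHr.
case: (boolP (P j)) => [_|/T0 [v [k ->]]]; first exact: comb_equiv_refl.
exact: ml_equiv_zero_entry.
Qed.

Lemma ml_equiv_expand (u : tup) i (s : seq (F * tup)) :
  ml_equiv [:: (1, upd u i (\sum_(p <- s) p.1 *: hl_br p.2))]
           [seq (p.1, upd u i (hl_br p.2)) | p <- s].
Proof.
elim: s => [|[a w] s IHs]; first by rewrite big_nil; apply: ml_equiv_zero_entry.
apply: comb_equiv_trans (comb_equiv_cat (s1 := [:: _]) (comb_equiv_refl _ _) IHs).
rewrite big_cons.
have ml : ml_rel (ml_gen i u a (hl_br w) (\sum_(p <- s) p.1 *: hl_br p.2)).
  by eexists (_, _, _, _, _).
apply: comb_span_coef (comb_span_gen ml).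
by move=> v; rewrite /ml_gen /= !comb_coef_cons comb_coef_nil; ring.
Qed.

Lemma delta2_equiv (P : pred 'I_n) (x : tup) (y : {ffun 'I_n.-1 -> K}) :
    (forall j, ~~ P j -> hl_br (hd_tup (x j) y) = 0) ->
  ml_equiv (delta2 x y) ((1, hd_tup (hl_br x) (fmap' al y))
    :: [seq (-1, upd (fmap al x) j (hl_br (hd_tup (x j) y))) | j <- enum 'I_n & P j]).
Proof.
move=> xP; apply: (comb_equiv_cat (s1 := [:: _]) (comb_equiv_refl _ _)).
by apply: ml_equiv_filter => j /xP ->; exists (fmap al x), j.
Qed.

Lemma delta2_comb1 a (x : tup) (y : {ffun 'I_n.-1 -> K}) :
  delta2_comb [:: (a, (x, y))] = comb_scale a (delta2 x y).
Proof. by rewrite /delta2_comb /= cats0. Qed.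

Definition in_im_delta2 (s : seq (F * tup)) := exists d, ml_equiv s (delta2_comb d).

Lemma im_delta2_nil : in_im_delta2 [::].
Proof. by exists [::]; apply: comb_equiv_refl. Qed.

Lemma im_delta2_cat s t : in_im_delta2 s -> in_im_delta2 t -> in_im_delta2 (s ++ t).
Proof.
move=> [d1 e1] [d2 e2]; exists (d1 ++ d2).
rewrite /delta2_comb (flatten_comb_cat (fun q => delta2 q.1 q.2)).
exact: comb_equiv_cat.
Qed.

Lemma im_delta2_scale c s : in_im_delta2 s -> in_im_delta2 (comb_scale c s).
Proof.
move=> [d e]; exists [seq (c * q.1, q.2) | q <- d].
by rewrite /delta2_comb (flatten_comb_scale (fun q => delta2 q.1 q.2)); apply: comb_equiv_scale.
Qed.

Lemma im_delta2_equiv s t : ml_equiv s t -> in_im_delta2 t -> in_im_delta2 s.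
Proof. by move=> st [d e]; exists d; apply: comb_equiv_trans e. Qed.

Section AlphaCentralTuple.
Variables (x : tup) (i : 'I_n) (c : 'I_n -> K).
Hypothesis xc : forall j, j != i -> pi (c j) = 0 /\ x j = al (c j).

(* For [i = 0] the tuple is the leading term of [delta2 w y], [y_k = c_{k+1}];
   the other terms contain a bracket with an entry [c_1] in the centre. *)
Lemma alpha_central_bracket_im0 w : i = ord0 -> in_im_delta2 [:: (1, upd x i (hl_br w))].
Proof.
move=> i0; pose y : {ffun 'I_n.-1 -> K} := [ffun k => c (lift ord0 k)].
have ci : lift ord0 ord0 != i by rewrite i0 eq_sym neq_lift.
have hd_x : hd_tup (hl_br w) (fmap' al y) = upd x i (hl_br w).
  apply/ffunP => j; case: (unliftP ord0 j) => [k ->|->]; last by rewrite hd_tup0 ffunE i0 eqxx.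
  have ki : lift ord0 k != i by rewrite i0 eq_sym neq_lift.
  by rewrite hd_tupS !ffunE (negbTE ki) (xc ki).2.
have y_ker j : ~~ pred0 j -> hl_br (hd_tup (n := n) (w j) y) = 0.
  by move=> _; apply: (br_ker_entry (j := lift ord0 ord0) (xc ci).1); rewrite hd_tupS ffunE.
have := delta2_equiv y_ker; rewrite filter_pred0 hd_x => /comb_equiv_sym eq_x.
exists [:: (1, (w, y))]; apply: comb_equiv_trans eq_x _.
by rewrite delta2_comb1; apply: comb_equiv_coef => v; rewrite comb_coef_scale mul1r.
Qed.

(* For [i <> 0] the tuple is minus the [i]-th term of [delta2 u z], where [u] has
   [w_0] at [i] and the [c_j] elsewhere and [z_k = w_{k+1}]. *)
Lemma alpha_central_bracket_imS w : i != ord0 -> in_im_delta2 [:: (1, upd x i (hl_br w))].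
Proof.
move=> i_neq0; pose u : tup := [ffun j => if j == i then w ord0 else c j].
pose z : {ffun 'I_n.-1 -> K} := [ffun k => w (lift ord0 k)].
have br_c j : j != i -> forall v, hl_br (hd_tup (n := n) (c j) v) = 0.
  by move=> ji v; apply: (br_ker_entry (j := ord0) (xc ji).1); rewrite hd_tup0.
have br_u : hl_br u = 0.
  have i0 : ord0 != i by rewrite eq_sym.
  by apply: (br_ker_entry (j := ord0) (xc i0).1); rewrite ffunE (negbTE i0).
have u_i : upd (fmap al u) i (hl_br (hd_tup (u i) z)) = upd x i (hl_br w).
  rewrite ffunE eqxx hd_tup_eta; apply/ffunP => j; rewrite !ffunE.
  by case: eqP => // /eqP ji; rewrite (xc ji).2.
have u_ker j : ~~ pred1 i j -> hl_br (hd_tup (u j) z) = 0.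
  by move=> /= ji; rewrite ffunE (negbTE ji) br_c.
have := delta2_equiv u_ker.
rewrite br_u filter_pred1_uniq ?enum_uniq ?mem_enum // [map _ [:: i]]/= u_i => eq_u.
have drop_head : ml_equiv ((1, hd_tup 0 (fmap' al z)) :: [:: (-1, upd x i (hl_br w))])
                          [:: (-1, upd x i (hl_br w))].
  apply: (comb_equiv_cat (s1 := [:: _]) (t1 := [::])) (comb_equiv_refl _ _).
  by rewrite -(upd_id (hd_tup 0 (fmap' al z)) ord0) hd_tup0; apply: ml_equiv_zero_entry.
exists [:: (-1, (u, z))]; apply: comb_equiv_sym.
apply: (comb_equiv_trans (t := comb_scale (-1) (delta2 u z))).
  by rewrite delta2_comb1; apply: comb_equiv_refl.
apply: comb_equiv_trans (comb_equiv_scale (-1) (comb_equiv_trans eq_u drop_head)) _.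
by apply: comb_equiv_coef => v; rewrite /= !comb_coef_cons comb_coef_nil; ring.
Qed.
End AlphaCentralTuple.

Lemma alpha_central_tuple_im u i : alpha_central_at u i -> in_im_delta2 [:: (1, u)].
Proof.
move=> u_ac; have [c uc] : exists c : 'I_n -> K,
    forall j, j != i -> pi (c j) = 0 /\ u j = al (c j).
  suff /fin_all_exists[c uc] : forall j, exists c, j != i -> pi c = 0 /\ u j = al c.
    by exists c.
  move=> j; case: (eqVneq j i) => [_|ji]; first by exists 0.
  by have [c cj] := u_ac j ji; exists c.
have br_im w : in_im_delta2 [:: (1, upd u i (hl_br w))].
  case: (eqVneq i ord0) => [i0|i_neq0]; first exact: alpha_central_bracket_im0 uc w i0.
  exact: alpha_central_bracket_imS uc w i_neq0.
have [s ui] := HL0 (u i).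
rewrite -(upd_id u i) ui; apply: im_delta2_equiv (ml_equiv_expand u i s) _.
elim: s {ui} => [|[a w] s IHs]; first exact: im_delta2_nil.
apply: (im_delta2_cat (s := [:: _])) IHs.
by move: (im_delta2_scale a (br_im w)); rewrite /comb_scale /= mulr1.
Qed.

Lemma hl1_span_im s : comb_span hl1_rel s -> in_im_delta2 s.
Proof.
elim=> [{}s [ml|[x [y ->]]|[u [i [-> u_ac]]]]||t r _ ht _ hr|c t _ ht|t r eq_tr _ ht].
- by exists [::]; apply/comb_equiv_nil/comb_span_gen.
- exists [:: (1, (x, y))]; rewrite delta2_comb1.
  by apply: comb_equiv_coef => v; rewrite comb_coef_scale mul1r.
- exact: alpha_central_tuple_im u_ac.
- exact: im_delta2_nil.
- exact: im_delta2_cat.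
- exact: im_delta2_scale.
- by apply: im_delta2_equiv ht; apply: comb_equiv_coef => v; rewrite eq_tr.
Qed.

Lemma HL1 : HL1_trivial K.
Proof.
move=> t /delta1_ker_span /hl1_span_im [d t_d]; exists d.
have [g e] := comb_span_flatten
  (gen := fun q => ml_gen q.1.1.1.1 q.1.1.1.2 q.1.1.2 q.1.2 q.2) t_d.
by exists g => u; have := e u; rewrite comb_coef_cat comb_coef_scale mulN1r.
Qed.
End Homology1.
End UniversalExtension.

Theorem theorem3p11 (F : fieldType) (n : nat) (hn : (2 <= n)%N)
    (K L : hleib F n) (pi : K -> L) :
  universal_alpha_central_ext pi ->
  HL0_trivial K /\ HL1_trivial K.
Proof.
case: n hn K L pi => [|[|m]] // _ K L pi pi_univ.
by split; [exact: HL0 pi_univ | exact: HL1 pi_univ].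
Qed.
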